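(* Let $G'=(V',W',E')$ be a bipartite graph with $|V'|=|W'|=k$ and maximum matching size $\mathrm{OPT}'$, let $b\ge1$ be an integer, and let $\rho\ge1$. Form $G=(V,W,E)$ by taking $b$ copies of each vertex of $V'$, setting $W=W'$ with every good having supply $b$, and connecting every copy of $v'$ to $w'$ whenever $(v',w')\in E'$. Let $M^*$ be a many-to-one matching in $G$ (each vertex of $V$ matched to at most one good, each good matched to at most $b$ vertices) with $|M^*|\ge b\,\mathrm{OPT}'/\rho$. For each $v'\in V'$ independently, choose one of its $b$ copies uniformly at random and take that copy's edge in $M^*$ (if any), viewed as an edge of $G'$; if several chosen edges share a good, keep only one of them. Then the resulting matching of $G'$ has expected size at least $\mathrm{OPT}'/(3\rho)$. *)

From HB Require Import structures.
From mathcomp Require Import all_boot all_order all_algebra.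
Set Implicit Arguments. Unset Strict Implicit. Unset Printing Implicit Defensive.
Import Order.TTheory GRing.Theory Num.Theory.

(* Bipartite graph G' = (V', W', E') with V' = W' = 'I_k; E v w : edge (v,w). *)

Definition is_matching (k : nat) (E : 'I_k -> 'I_k -> bool)
    (M : {set 'I_k * 'I_k}) : bool :=
  [forall e in M, E e.1 e.2] &&
  [forall e1 in M, forall e2 in M,
     ((e1.1 == e2.1) || (e1.2 == e2.2)) ==> (e1 == e2)].

Definition OPT (k : nat) (E : 'I_k -> 'I_k -> bool) : nat :=
  \max_(M : {set 'I_k * 'I_k} | is_matching E M) #|M|.

(* The blown-up graph G: V = 'I_k * 'I_b (copy i of v'), W = 'I_k (supply b).
   A many-to-one matching is a map  M : V -> option W. *)
Definition is_many_to_one_matching (k b : nat) (E : 'I_k -> 'I_k -> bool)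
    (M : 'I_k * 'I_b -> option 'I_k) : Prop :=
  (forall (v : 'I_k) (i : 'I_b) (w : 'I_k), M (v, i) = Some w -> E v w) /\
  (forall w : 'I_k, #|[set x : 'I_k * 'I_b | M x == Some w]| <= b)%N.

Definition mm_size (k b : nat) (M : 'I_k * 'I_b -> option 'I_k) : nat :=
  #|[set x : 'I_k * 'I_b | M x != None]|.

(* Rounding with choice c (copy c v chosen for each v'): the chosen edges
   (v', w) with M (v', c v') = Some w; after keeping exactly one edge per good,
   the resulting matching of G' has one edge per good hit, so its size is
   the number of distinct goods hit. *)
Definition rounded_goods (k b : nat) (M : 'I_k * 'I_b -> option 'I_k)
    (c : {ffun 'I_k -> 'I_b}) : {set 'I_k} :=
  [set w : 'I_k | [exists v : 'I_k, M (v, c v) == Some w]].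

Definition expected_rounded_size (R : numFieldType) (k b : nat)
    (M : 'I_k * 'I_b -> option 'I_k) : R :=
  ((\sum_(c : {ffun 'I_k -> 'I_b}) (#|rounded_goods M c|)%:R)
     / (#|{ffun 'I_k -> 'I_b}|)%:R)%R.

From HB Require Import structures.
From mathcomp Require Import all_boot all_order all_algebra.
From mathcomp Require Import lra.
Set Implicit Arguments. Unset Strict Implicit. Unset Printing Implicit Defensive.
Import Order.TTheory GRing.Theory Num.Theory.
Local Open Scope ring_scope.

(* For a good w, let x_v = share v w be the fraction of the b copies of v that M
   sends to w.  Choosing the copies uniformly and independently, w is hit with
   probability 1 - prod_v (1 - x_v), and the supply bound gives s := sum_v x_v <= 1.
   Second-order Bonferroni yields 1 - prod_v (1 - x_v) >= s - s^2/2 >= s/2, so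
   summing over goods the expected size is at least |M*| / (2b) >= OPT' / (2 rho). *)

Lemma bonferroni_prod (R : realFieldType) (I : Type) (r : seq I) (x : I -> R) :
  (forall i, 0 <= x i <= 1) ->
  (\sum_(i <- r) x i) - (\sum_(i <- r) x i) ^+ 2 / 2 <=
    1 - \prod_(i <- r) (1 - x i).
Proof.
move=> x01; elim: r => [|i r IHr].
  by rewrite !big_nil expr2 mulr0 mul0r !subrr.
rewrite !big_cons; move: IHr.
set p := \prod_(j <- r) _; set s := \sum_(j <- r) _ => IHr.
have /andP[xi_ge0 xi_le1] := x01 i.
(* Scale the induction hypothesis by 1 - x i; what is left over is nonnegative. *)
have scaled_IHr : 0 <= (1 - x i) * ((1 - p) - (s - s ^+ 2 / 2)) by apply: mulr_ge0; lra.
have xi_s2_ge0 : 0 <= x i * s ^+ 2 by apply: mulr_ge0 => //; apply: sqr_ge0.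
have xi2_ge0 : 0 <= x i ^+ 2 by apply: sqr_ge0.
rewrite !expr2 in scaled_IHr xi_s2_ge0 xi2_ge0 *; nra.
Qed.

Lemma half_sum_le_one_sub_prod (R : realFieldType) (I : Type) (r : seq I)
    (x : I -> R) :
  (forall i, 0 <= x i <= 1) -> \sum_(i <- r) x i <= 1 ->
  (\sum_(i <- r) x i) / 2 <= 1 - \prod_(i <- r) (1 - x i).
Proof.
move=> x01 sum_le1; apply: le_trans _ (bonferroni_prod r x01).
have : 0 <= \sum_(i <- r) x i by apply: sumr_ge0 => i _; case/andP: (x01 i).
move: (\sum_(i <- r) x i) sum_le1 => s s_le1 s_ge0.
rewrite expr2; nra.
Qed.

Lemma natr_card (R : pzSemiRingType) (T : finType) (A : {set T}) :
  (#|A|)%:R = \sum_t ((t \in A)%:R : R).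
Proof.
rewrite -sum1_card natr_sum big_mkcond /=; apply: eq_bigr => t _.
by case: (t \in A).
Qed.

Lemma sum_eq_Some (R : pzSemiRingType) (T : finType) (o : option T) :
  \sum_t ((o == Some t)%:R : R) = (o != None)%:R.
Proof.
case: o => [t0|]; last by rewrite big1.
rewrite (bigD1 t0) //= eqxx big1 ?addr0 // => t t_neq.
by rewrite (inj_eq (@Some_inj _)) eq_sym (negbTE t_neq).
Qed.

Lemma in_rounded_goods (R : comPzRingType) (k b : nat)
    (M : 'I_k * 'I_b -> option 'I_k) (c : {ffun 'I_k -> 'I_b}) (w : 'I_k) :
  ((w \in rounded_goods M c)%:R : R) =
    1 - \prod_v (1 - (M (v, c v) == Some w)%:R).
Proof.
rewrite inE; case: existsP => [[v hit]|miss].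
  by rewrite (bigD1 v) //= hit subrr mul0r subr0.
rewrite big1 ?subrr // => v _.
have -> : (M (v, c v) == Some w) = false by apply/negP => hit; apply: miss; exists v.
by rewrite subr0.
Qed.

Section Rounding.

Variables (R : realFieldType) (k b : nat) (M : 'I_k * 'I_b -> option 'I_k).
Hypothesis b_gt0 : (0 < b)%N.

Definition share (v w : 'I_k) : R :=
  (\sum_i ((M (v, i) == Some w)%:R : R)) / b%:R.

Let b_neq0 : (b%:R : R) != 0. Proof. by rewrite pnatr_eq0 -lt0n. Qed.
Let b_gt0R : (0 : R) < b%:R. Proof. by rewrite ltr0n. Qed.

Lemma share_ge0 v w : 0 <= share v w.
Proof. by rewrite divr_ge0 ?ler0n // sumr_ge0 // => i _; rewrite ler0n. Qed.

Lemma share_le1 v w : share v w <= 1.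
Proof.
rewrite ler_pdivrMr // mul1r -[X in _ <= X%:R]card_ord -sumr_const.
by apply: ler_sum => i _; rewrite lern1 leq_b1.
Qed.

Lemma sum_share_le1 w :
  (#|[set x | M x == Some w]| <= b)%N -> \sum_v share v w <= 1.
Proof.
move=> supply_w; rewrite -mulr_suml pair_bigA /= ler_pdivrMr // mul1r.
rewrite (eq_bigr (fun p => ((p \in [set x | M x == Some w])%:R : R))).
  by rewrite -natr_card ler_nat.
by move=> -[v i] _; rewrite inE.
Qed.

Lemma sum_share : \sum_w \sum_v share v w = (mm_size M)%:R / b%:R.
Proof.
rewrite /share; under eq_bigr do rewrite -mulr_suml.
rewrite -mulr_suml exchange_big /=; congr (_ * _).
under eq_bigr do rewrite exchange_big /=.
rewrite /mm_size natr_card pair_bigA /=; apply: eq_bigr => -[v i] _.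
by rewrite inE sum_eq_Some.
Qed.

Lemma expected_rounded_sizeE :
  expected_rounded_size R M = \sum_w (1 - \prod_v (1 - share v w)).
Proof.
have card_choices : ((#|{ffun 'I_k -> 'I_b}|)%:R : R) = \prod_(v : 'I_k) b%:R.
  by rewrite card_ffun !card_ord natrX prodr_const card_ord.
have choices_neq0 : ((#|{ffun 'I_k -> 'I_b}|)%:R : R) != 0.
  by rewrite card_choices; apply/prodf_neq0 => v _.
rewrite /expected_rounded_size; under eq_bigr do rewrite natr_card.
rewrite exchange_big /= mulr_suml; apply: eq_bigr => w _.
under eq_bigr do rewrite in_rounded_goods.
rewrite sumrB sumr_const -mulr_natl mulr1 mulrBl divff //; congr (_ - _).
rewrite -(bigA_distr_bigA (fun v i => 1 - (M (v, i) == Some w)%:R)) /=.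
rewrite card_choices -prodf_div; apply: eq_bigr => v _.
by rewrite /share sumrB sumr_const card_ord -mulr_natl mulr1 mulrBl divff.
Qed.

Lemma expected_rounded_size_ge :
  (forall w, #|[set x | M x == Some w]| <= b)%N ->
  (mm_size M)%:R / b%:R / 2 <= expected_rounded_size R M.
Proof.
move=> supply; rewrite expected_rounded_sizeE -sum_share mulr_suml.
apply: ler_sum => w _; apply: half_sum_le_one_sub_prod (sum_share_le1 (supply w)).
by move=> v; rewrite share_ge0 share_le1.
Qed.

End Rounding.

Theorem lemma3 (R : realFieldType) (k b : nat) (E : 'I_k -> 'I_k -> bool)
    (rho : R) (M : 'I_k * 'I_b -> option 'I_k) :
  (1 <= b)%N -> 1 <= rho ->
  is_many_to_one_matching E M ->
  (b%:R * (OPT E)%:R / rho <= (mm_size M)%:R) ->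
  (OPT E)%:R / (3 * rho) <= expected_rounded_size R M.
Proof.
move=> b_gt0 rho_ge1 [_ supply] large_M.
apply: le_trans _ (expected_rounded_size_ge R b_gt0 supply).
have rho_gt0 : 0 < rho by apply: lt_le_trans rho_ge1; exact: ltr01.
have b_gt0R : (0 : R) < b%:R by rewrite ltr0n.
have opt_le : (OPT E)%:R / rho <= (mm_size M)%:R / b%:R.
  by rewrite ler_pdivlMr // mulrC mulrA.
have opt_ge0 : 0 <= (OPT E)%:R / rho by rewrite divr_ge0 // ltW.
rewrite invfM (mulrC 3^-1) mulrA.
move: opt_le opt_ge0; move: (_ / rho) (_ / b%:R) => q t; lra.
Qed.
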